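(* Let $X$ be a real Banach space and $A: X\rightrightarrows X^*$ a maximal monotone operator with $\mathcal{F}_A=\{F_A\}$. Then for every $\lambda_1,\lambda_2>0$ and $(w,w^* )\in X\times X^*$, the operator $\widehat{A}$ with graph \[ \mathrm{Gr}(\widehat{A}) = \{(\lambda_1 x - w,\ \lambda_2 x^* - w^* ): (x,x^* )\in\mathrm{Gr}(A)\} \] is maximal monotone and satisfies $\mathcal{F}_{\widehat{A}} = \{F_{\widehat{A}}\}$.
   Context: For a maximal monotone $A$, a representative function is a proper convex lsc $h: X\times X^*\to\mathbb{R}\cup\{+\infty\}$ with $h(x,x^* )\ge\langle x,x^*\rangle$ for all $(x,x^* )$ and equality on $\mathrm{Gr}(A)$; $\mathcal{F}_A$ is the set of all such functions. $F_A(x,x^* ) = \sup_{(y,y^* )\in\mathrm{Gr}(A)}\{\langle y,x^*\rangle + \langle x,y^*\rangle - \langle y,y^*\rangle\}$ is the Fitzpatrick function. *)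

From HB Require Import structures.
From mathcomp Require Import all_boot all_order all_algebra.
From mathcomp Require Import all_classical all_reals all_analysis.
From mathcomp Require Import ring.
Set Implicit Arguments. Unset Strict Implicit. Unset Printing Implicit Defensive.
Import Order.TTheory GRing.Theory Num.Theory.
Import numFieldNormedType.Exports.
Local Open Scope classical_set_scope.
Local Open Scope ring_scope.

Section Dual.
Variables (R : realType) (X : normedModType R).

Record dual := Dual {
  dfun :> X -> R;
  dfun_add : forall x y, dfun (x + y) = dfun x + dfun y;
  dfun_scale : forall (a : R) x, dfun (a *: x) = a * dfun x;
  dfun_cont : continuous dfun }.

Lemma dlin_add (a b : R) (f g : dual) x y :
  a * f (x + y) + b * g (x + y) = (a * f x + b * g x) + (a * f y + b * g y).
Proof. by rewrite !dfun_add; ring. Qed.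

Lemma dlin_scale (a b : R) (f g : dual) (c : R) x :
  a * f (c *: x) + b * g (c *: x) = c * (a * f x + b * g x).
Proof. by rewrite !dfun_scale; ring. Qed.

Lemma dlin_cont (a b : R) (f g : dual) :
  continuous (fun x => a * f x + b * g x).
Proof.
move=> x.
have Ha : {for x, continuous (fun _ : X => a)} by exact: cst_continuous.
have Hb : {for x, continuous (fun _ : X => b)} by exact: cst_continuous.
have Hf := continuousM Ha (@dfun_cont f x).
have Hg := continuousM Hb (@dfun_cont g x).
exact: (continuousD Hf Hg).
Qed.

Definition dlin (a b : R) (f g : dual) : dual :=
  @Dual (fun x => a * f x + b * g x) (@dlin_add a b f g)
        (@dlin_scale a b f g) (@dlin_cont a b f g).

End Dual.

Section Monotone.
Variables (R : realType) (X : normedModType R).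
Local Open Scope ereal_scope.

(* A set-valued operator A : X ⇉ X^* is identified with its graph Gr(A). *)
Definition graph := set (X * dual X).

Definition pairing (x : X) (xs : dual X) : R := xs x.

Definition monotone (G : graph) : Prop :=
  forall p q, G p -> G q ->
    (0 <= pairing (p.1 - q.1) p.2 - pairing (p.1 - q.1) q.2)%R.

Definition maximal_monotone (G : graph) : Prop :=
  monotone G /\ forall G' : graph, monotone G' -> G `<=` G' -> G' = G.

Definition fitzpatrick (G : graph) (p : X * dual X) : \bar R :=
  ereal_sup [set (pairing q.1 p.2 + pairing p.1 q.2 - pairing q.1 q.2)%:E
            | q in G].

Definition proper_fun (h : X * dual X -> \bar R) : Prop :=
  (forall p, h p != -oo) /\ (exists p, h p < +oo).

Definition convex_fun (h : X * dual X -> \bar R) : Prop :=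
  forall p q (t : R), (0 < t < 1)%R ->
    h ((t *: p.1 + (1 - t) *: q.1)%R, dlin t (1 - t) p.2 q.2)
      <= t%:E * h p + (1 - t)%:E * h q.

(* lower semicontinuity w.r.t. the (strong) norm topology of X × X^*,
   where the dual norm condition ||x^* - y^*|| <= d is written out as
   |x^*(y) - y^*(y)| <= d ||y|| for all y. *)
Definition lsc_fun (h : X * dual X -> \bar R) : Prop :=
  forall p (r : R), r%:E < h p ->
    exists2 d : R, (0 < d)%R & forall q : X * dual X,
      (`|q.1 - p.1| <= d)%R ->
      (forall y : X, `|q.2 y - p.2 y| <= d * `|y|)%R ->
      r%:E < h q.

Definition representative (G : graph) (h : X * dual X -> \bar R) : Prop :=
  [/\ proper_fun h, convex_fun h, lsc_fun h,
      (forall p, (pairing p.1 p.2)%:E <= h p) &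
      (forall p, G p -> h p = (pairing p.1 p.2)%:E)].

Definition repfam (G : graph) : set (X * dual X -> \bar R) :=
  [set h | representative G h].

Definition affine_graph (l1 l2 : R) (w : X) (ws : dual X) (G : graph) : graph :=
  [set ((l1 *: p.1 - w)%R, dlin l2 (-1) p.2 ws) | p in G].

End Monotone.

From Pilot Require Import Defs.
From HB Require Import structures.
From mathcomp Require Import all_boot all_order all_algebra.
From mathcomp Require Import all_classical all_reals all_analysis.
From mathcomp Require Import ring lra.
Set Implicit Arguments. Unset Strict Implicit. Unset Printing Implicit Defensive.
Import Order.TTheory GRing.Theory Num.Theory.
Import numFieldNormedType.Exports.
Local Open Scope classical_set_scope.
Local Open Scope ring_scope.

(* The affine bijection T (x, f) = (l1 x - w, l2 f - g) of X * X^* multiplies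
   the monotonicity gap <x - y, f - f'> by l1 l2 > 0, so it maps maximal
   monotone graphs onto maximal monotone graphs.  On functions it acts by
   h |-> l1 l2 (h o T^-1) + c, where c is the continuous affine function with
   <x, f> = l1 l2 <T^-1 (x, f)> + c (x, f); this preserves properness,
   convexity, lower semicontinuity and both representative conditions, and it
   maps F_A onto F_Ahat.  As T^-1 is an affine bijection of the same kind, the
   action is a bijection from the representative functions of A onto those of
   Ahat, so a singleton family is mapped to a singleton family. *)

Section ScaleShift.
Variables (R : realFieldType) (k : R).
Hypothesis k_gt0 : 0 < k.
Local Open Scope ereal_scope.

Lemma lte_EFin_dense (r : R) (x : \bar R) :
  r%:E < x -> exists2 s : R, (r < s)%R & s%:E < x.
Proof.
case: x => [b||] //; last by exists (r + 1)%R; rewrite ?ltey //; lra.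
by rewrite lte_fin => rb; exists ((r + b) / 2)%R; rewrite ?lte_fin; lra.
Qed.

Lemma scale_shift_neqNy (c : R) (x : \bar R) :
  x != -oo -> k%:E * x + c%:E != -oo.
Proof. by case: x => [b||] //; rewrite gt0_muley ?lte_fin. Qed.

Lemma lee_scale_shift (c : R) (x y : \bar R) :
  x <= y -> k%:E * x + c%:E <= k%:E * y + c%:E.
Proof. by move=> xy; rewrite leeD2r // lee_wpmul2l // lee_fin ltW. Qed.

Lemma lte_scale_shift (c r : R) (x : \bar R) :
  (r%:E < k%:E * x + c%:E) = (((r - c) / k)%:E < x).
Proof.
case: x => [b||]; last by rewrite gt0_muleNy ?lte_fin.
  by rewrite -EFinM -EFinD !lte_fin ltr_pdivrMr // -ltrBlDr mulrC.
by rewrite gt0_muley ?lte_fin // addye // !ltey.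
Qed.

Lemma scale_shift_comb (t c d : R) (a b : \bar R) :
  (0 < t < 1)%R -> a != -oo -> b != -oo ->
  k%:E * (t%:E * a + (1 - t)%:E * b) + (t * c + (1 - t) * d)%:E =
  t%:E * (k%:E * a + c%:E) + (1 - t)%:E * (k%:E * b + d%:E).
Proof.
move=> /andP[t_gt0 t_lt1]; have t1_gt0 : (0 < 1 - t)%R by rewrite subr_gt0.
case: a => [a||] // _; case: b => [b||] // _.
- by rewrite -!EFinM -!EFinD; congr EFin; ring.
- by rewrite !(gt0_muley, addey, addye) ?lte_fin ?mulr_gt0.
- by rewrite !(gt0_muley, addey, addye) ?lte_fin ?mulr_gt0.
- by rewrite !(gt0_muley, addey, addye) ?lte_fin ?mulr_gt0.
Qed.

Lemma scale_shiftA (k' c c' : R) (x : \bar R) : (0 < k')%R ->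
  k%:E * (k'%:E * x + c'%:E) + c%:E = (k * k')%:E * x + (k * c' + c)%:E.
Proof.
move=> k'_gt0; case: x => [x||].
- by rewrite -!EFinM -!EFinD; congr EFin; ring.
- by rewrite !(gt0_muley, addye) ?lte_fin ?mulr_gt0.
- by rewrite !(gt0_muleNy, addNye) ?lte_fin ?mulr_gt0.
Qed.

End ScaleShift.

Section DualPairs.
Variables (R : realType) (X : normedModType R).

Lemma dual_ext (f g : dual X) : f =1 g -> f = g.
Proof.
case: f g => f fD fZ fC [g gD gZ gC] /= /funext fg; subst g.
by congr Dual; exact: Prop_irrelevance.
Qed.

Lemma dfunN (f : dual X) x : f (- x) = - f x.
Proof. by rewrite -scaleN1r dfun_scale mulN1r. Qed.

Lemma dfunB (f : dual X) x y : f (x - y) = f x - f y.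
Proof. by rewrite dfun_add dfunN. Qed.

Lemma dfun0 (f : dual X) : f 0 = 0.
Proof. by rewrite -(subrr 0) dfunB subrr. Qed.

Definition convex_comb (t : R) (p q : X * dual X) : X * dual X :=
  (t *: p.1 + (1 - t) *: q.1, Defs.dlin t (1 - t) p.2 q.2).

Definition pair_close (d : R) (p q : X * dual X) : Prop :=
  `|q.1 - p.1| <= d /\ forall y, `|q.2 y - p.2 y| <= d * `|y|.

Lemma pair_close_le (d d' : R) p q :
  d <= d' -> pair_close d p q -> pair_close d' p q.
Proof.
move=> dd' [near1 near2]; split; first exact: le_trans dd'.
by move=> y; apply: le_trans (near2 y) _; rewrite ler_wpM2r.
Qed.

Lemma lsc_funP (h : X * dual X -> \bar R) :
  lsc_fun h <-> forall p (r : R), (r%:E < h p)%E ->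
    exists2 d : R, 0 < d & forall q, pair_close d p q -> (r%:E < h q)%E.
Proof.
split=> lsc_h p r /lsc_h[d d_gt0 hd]; exists d => // q.
  by case; exact: hd.
by move=> near1 near2; exact: hd.
Qed.

Lemma lsc_scale_shift (k : R) (h : X * dual X -> \bar R) (c : X * dual X -> R) :
  0 < k -> lsc_fun h ->
  (forall p e, 0 < e -> exists2 d, 0 < d &
     forall q, pair_close d p q -> c p - e < c q) ->
  lsc_fun (fun q => k%:E * h q + (c q)%:E)%E.
Proof.
move=> k_gt0 /lsc_funP lsc_h lsc_c; apply/lsc_funP => p r.
rewrite lte_scale_shift // => /lte_EFin_dense[s rs s_lt].
have [dh dh_gt0 near_h] := lsc_h p s s_lt.
pose e := k * s - (r - c p).
have e_gt0 : 0 < e by move: rs; rewrite ltr_pdivrMr // mulrC subr_gt0.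
have [dc dc_gt0 near_c] := lsc_c p e e_gt0.
exists (Num.min dh dc) => [|q near_q]; first by rewrite lt_min dh_gt0.
have /near_h hq : pair_close dh p q.
  by apply: pair_close_le near_q; rewrite ge_min lexx.
have /near_c cq : pair_close dc p q.
  by apply: pair_close_le near_q; rewrite ge_min lexx orbT.
rewrite lte_scale_shift //; apply: le_lt_trans hq; rewrite lee_fin ler_pdivrMr //.
rewrite /e in cq; lra.
Qed.

End DualPairs.

Section AffineChange.
Variables (R : realType) (X : normedModType R) (l1 l2 : R) (w : X) (ws : dual X).
Hypotheses (l1_gt0 : 0 < l1) (l2_gt0 : 0 < l2).

Let l1_neq0 : l1 != 0. Proof. by rewrite gt_eqF. Qed.
Let l2_neq0 : l2 != 0. Proof. by rewrite gt_eqF. Qed.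
Let l12_gt0 : 0 < l1 * l2. Proof. exact: mulr_gt0. Qed.

Definition affine_map (p : X * dual X) : X * dual X :=
  (l1 *: p.1 - w, Defs.dlin l2 (-1) p.2 ws).

Definition affine_unmap (q : X * dual X) : X * dual X :=
  (l1^-1 *: (q.1 + w), Defs.dlin l2^-1 l2^-1 q.2 ws).

Lemma affine_mapK : cancel affine_map affine_unmap.
Proof.
case=> x xs; congr pair; first by rewrite subrK scalerA mulVf // scale1r.
by apply: dual_ext => y /=; field.
Qed.

Lemma affine_unmapK : cancel affine_unmap affine_map.
Proof.
case=> x xs; congr pair; first by rewrite scalerA mulfV // scale1r addrK.
by apply: dual_ext => y /=; field.
Qed.

Lemma affine_graphE (G : graph X) : affine_graph l1 l2 w ws G = affine_map @` G.
Proof. by []. Qed.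

Lemma pairing_affine_map_sub p q :
  pairing ((affine_map p).1 - (affine_map q).1) (affine_map p).2
    - pairing ((affine_map p).1 - (affine_map q).1) (affine_map q).2 =
  l1 * l2 * (pairing (p.1 - q.1) p.2 - pairing (p.1 - q.1) q.2).
Proof. by rewrite /pairing /= !(dfunB, dfun_scale); ring. Qed.

Lemma monotone_affine_image (G : graph X) :
  Defs.monotone G -> Defs.monotone (affine_map @` G).
Proof.
move=> monoG _ _ [p Gp <-] [q Gq <-].
by rewrite pairing_affine_map_sub pmulr_rge0 // monoG.
Qed.

Lemma monotone_affine_preimage (G : graph X) :
  Defs.monotone G -> Defs.monotone (affine_map @^-1` G).
Proof.
move=> monoG p q Gp Gq; have := monoG _ _ Gp Gq.
by rewrite pairing_affine_map_sub pmulr_rge0.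
Qed.

Lemma maximal_monotone_affine (G : graph X) :
  maximal_monotone G -> maximal_monotone (affine_graph l1 l2 w ws G).
Proof.
rewrite affine_graphE => -[monoG maxG]; split; first exact: monotone_affine_image.
move=> G' monoG' GG'.
have <- : affine_map @^-1` G' = G.
  apply: maxG; first exact: monotone_affine_preimage.
  by move=> p Gp; apply: GG'; exists p.
rewrite image_preimage //; apply/seteqP; split=> // q _.
by exists (affine_unmap q); rewrite ?affine_unmapK.
Qed.

Definition affine_offset (q : X * dual X) : R := - q.2 w - ws q.1 - ws w.

Lemma pairing_affine_unmap q :
  pairing q.1 q.2 =
  l1 * l2 * pairing (affine_unmap q).1 (affine_unmap q).2 + affine_offset q.
Proof.
by rewrite /pairing /affine_offset /= !(dfun_add, dfun_scale); field; apply/andP.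
Qed.

Lemma affine_unmap_comb t p q :
  affine_unmap (convex_comb t p q) =
  convex_comb t (affine_unmap p) (affine_unmap q).
Proof.
congr pair; last by apply: dual_ext => y /=; ring.
rewrite /= !scalerDr !scalerA addrACA -scalerDl.
by congr (_ *: _ + _ *: _ + _ *: _); ring.
Qed.

Lemma affine_offset_comb t p q :
  affine_offset (convex_comb t p q) =
  t * affine_offset p + (1 - t) * affine_offset q.
Proof. by rewrite /affine_offset /= !(dfun_add, dfun_scale); ring. Qed.

Lemma pair_close_affine_unmap (d : R) p q :
  pair_close (Num.min (l1 * d) (l2 * d)) p q ->
  pair_close d (affine_unmap p) (affine_unmap q).
Proof.
move=> [near1 near2]; split.
  rewrite /= -scalerBr opprD addrACA subrr addr0 normrZ gtr0_norm ?invr_gt0 //.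
  by rewrite ler_pdivrMl // (le_trans near1) // ge_min lexx.
move=> y; rewrite /= opprD addrACA subrr addr0 -mulrBr normrM gtr0_norm ?invr_gt0 //.
rewrite ler_pdivrMl // mulrA (le_trans (near2 y)) // ler_wpM2r //.
by rewrite ge_min lexx orbT.
Qed.

Lemma lsc_comp_affine_unmap (h : X * dual X -> \bar R) :
  lsc_fun h -> lsc_fun (h \o affine_unmap).
Proof.
move=> /lsc_funP lsc_h; apply/lsc_funP => p r /lsc_h[d d_gt0 near_h].
exists (Num.min (l1 * d) (l2 * d)); first by rewrite lt_min !mulr_gt0.
by move=> q /pair_close_affine_unmap; exact: near_h.
Qed.

Lemma affine_offset_lsc p e : 0 < e -> exists2 d, 0 < d &
  forall q, pair_close d p q -> affine_offset p - e < affine_offset q.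
Proof.
move=> e_gt0; have e2_gt0 : 0 < e / 2 by rewrite divr_gt0.
have [del del_gt0 near_ws] :=
  (nbhs_normP _ _).1 ((cvgrPdist_lt _ _).1 (@dfun_cont _ _ ws p.1) _ e2_gt0).
have w1_gt0 : 0 < `|w| + 1 by rewrite ltr_wpDl.
pose d := Num.min (del / 2) (e / 2 / (`|w| + 1)).
have d_gt0 : 0 < d by rewrite lt_min !divr_gt0.
exists d => // q [near1 near2].
have ws_near : `|ws p.1 - ws q.1| < e / 2.
  apply: near_ws; rewrite /ball_ /= distrC (le_lt_trans near1) //.
  by rewrite /d gt_min ltr_pdivrMr // ltr_pMr // ltr1n.
have dw_le : d * `|w| <= e / 2.
  apply: (@le_trans _ _ (e / 2 / (`|w| + 1) * (`|w| + 1))); last first.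
    by rewrite divfK ?gt_eqF.
  by rewrite ler_pM ?normr_ge0 ?(ltW d_gt0) ?lerDl // /d ge_min lexx orbT.
move: ws_near (le_trans (near2 w) dw_le).
rewrite /affine_offset ler_norml ltr_norml => /andP[? ?] /andP[? ?].
lra.
Qed.

Definition affine_rep (h : X * dual X -> \bar R) (q : X * dual X) : \bar R :=
  ((l1 * l2)%:E * h (affine_unmap q) + (affine_offset q)%:E)%E.

Lemma affine_rep_le (h h' : X * dual X -> \bar R) q :
  (forall p, h p <= h' p)%E -> (affine_rep h q <= affine_rep h' q)%E.
Proof. by move=> hh'; apply: lee_scale_shift. Qed.

Lemma proper_affine_rep h : proper_fun h -> proper_fun (affine_rep h).
Proof.
move=> [h_neqNy [p hp_lty]]; split=> [q|]; first exact: scale_shift_neqNy.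
exists (affine_map p); rewrite /affine_rep affine_mapK.
by move: hp_lty (h_neqNy p); case: (h p) => // b _ _; rewrite -EFinM -EFinD ltey.
Qed.

Lemma convex_affine_rep h :
  (forall p, h p != -oo)%E -> convex_fun h -> convex_fun (affine_rep h).
Proof.
move=> h_neqNy convex_h p q t t01; rewrite -/(convex_comb t p q).
rewrite /affine_rep affine_unmap_comb affine_offset_comb.
by rewrite -scale_shift_comb ?h_neqNy //; apply: lee_scale_shift => //; exact: convex_h.
Qed.

Lemma lsc_affine_rep h : lsc_fun h -> lsc_fun (affine_rep h).
Proof.
move=> lsc_h.
exact: lsc_scale_shift (lsc_comp_affine_unmap lsc_h) affine_offset_lsc.
Qed.

Lemma affine_rep_ge_pairing h :
  (forall p, (pairing p.1 p.2)%:E <= h p)%E ->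
  forall q, ((pairing q.1 q.2)%:E <= affine_rep h q)%E.
Proof.
by move=> h_ge q; rewrite pairing_affine_unmap EFinD EFinM lee_scale_shift ?h_ge.
Qed.

Lemma affine_rep_affine_map h p : h p = (pairing p.1 p.2)%:E ->
  affine_rep h (affine_map p) = (pairing (affine_map p).1 (affine_map p).2)%:E.
Proof.
move=> hp; rewrite /affine_rep affine_mapK hp.
by rewrite (pairing_affine_unmap (affine_map p)) affine_mapK EFinD EFinM.
Qed.

Lemma representative_affine (G : graph X) h : representative G h ->
  representative (affine_graph l1 l2 w ws G) (affine_rep h).
Proof.
case=> proper_h convex_h lsc_h h_ge h_graph; split.
- exact: proper_affine_rep.
- exact: convex_affine_rep proper_h.1 convex_h.
- exact: lsc_affine_rep.
- exact: affine_rep_ge_pairing.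
- by move=> _ [p Gp <-]; exact: affine_rep_affine_map (h_graph p Gp).
Qed.

Lemma fitzpatrick_term_affine_map p q :
  pairing (affine_map p).1 q.2 + pairing q.1 (affine_map p).2
    - pairing (affine_map p).1 (affine_map p).2 =
  l1 * l2 * (pairing p.1 (affine_unmap q).2 + pairing (affine_unmap q).1 p.2
    - pairing p.1 p.2) + affine_offset q.
Proof.
rewrite /pairing /affine_offset /= !(dfunB, dfun_add, dfun_scale).
by field; apply/andP.
Qed.

Lemma fitzpatrick_affine_le (G : graph X) q :
  (fitzpatrick (affine_graph l1 l2 w ws G) q <= affine_rep (fitzpatrick G) q)%E.
Proof.
apply: ge_ereal_sup => _ [_ [p Gp <-] <-].
rewrite fitzpatrick_term_affine_map EFinD EFinM lee_scale_shift //.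
by apply: ereal_sup_ubound; exists p.
Qed.

End AffineChange.

Section AffineInverse.
Variables (R : realType) (X : normedModType R) (l1 l2 : R) (w : X) (ws : dual X).
Hypotheses (l1_gt0 : 0 < l1) (l2_gt0 : 0 < l2).

Let l1_neq0 : l1 != 0. Proof. by rewrite gt_eqF. Qed.
Let l2_neq0 : l2 != 0. Proof. by rewrite gt_eqF. Qed.
Let l1V_gt0 : 0 < l1^-1. Proof. by rewrite invr_gt0. Qed.
Let l2V_gt0 : 0 < l2^-1. Proof. by rewrite invr_gt0. Qed.

Let w' : X := - (l1^-1 *: w).
Let ws' : dual X := Defs.dlin (- l2^-1) 0 ws ws.

Lemma affine_map_inv : affine_map l1^-1 l2^-1 w' ws' =1 affine_unmap l1 l2 w ws.
Proof.
case=> x xs; congr pair; first by rewrite /= opprK scalerDr.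
by apply: dual_ext => y /=; ring.
Qed.

Lemma affine_unmap_inv : affine_unmap l1^-1 l2^-1 w' ws' =1 affine_map l1 l2 w ws.
Proof.
case=> x xs; rewrite /affine_unmap /= !invrK; congr pair.
  by rewrite scalerDr scalerN scalerA mulfV // scale1r.
by apply: dual_ext => y /=; field.
Qed.

Lemma affine_offset_inv q :
  l1 * l2 * affine_offset w' ws' (affine_unmap l1 l2 w ws q) + affine_offset w ws q = 0.
Proof.
rewrite /affine_offset /= !(dfunN, dfun_add, dfun_scale, dfun0).
by field; apply/andP.
Qed.

Lemma affine_graphK (G : graph X) :
  affine_graph l1^-1 l2^-1 w' ws' (affine_graph l1 l2 w ws G) = G.
Proof.
rewrite !affine_graphE image_comp.
have -> : affine_map l1^-1 l2^-1 w' ws' \o affine_map l1 l2 w ws = id.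
  by apply: funext => p /=; rewrite affine_map_inv affine_mapK.
exact: image_id.
Qed.

Lemma affine_repK (h : X * dual X -> \bar R) :
  affine_rep l1 l2 w ws (affine_rep l1^-1 l2^-1 w' ws' h) = h.
Proof.
apply: funext => q; rewrite /affine_rep affine_unmap_inv affine_unmapK //.
rewrite scale_shiftA ?mulr_gt0 // affine_offset_inv.
by rewrite mulrACA !mulfV // mulr1 mul1e adde0.
Qed.

Lemma fitzpatrick_affine (G : graph X) :
  fitzpatrick (affine_graph l1 l2 w ws G) = affine_rep l1 l2 w ws (fitzpatrick G).
Proof.
apply: funext => q; apply/le_anti/andP; split; first exact: fitzpatrick_affine_le.
rewrite -(affine_repK (fitzpatrick (affine_graph l1 l2 w ws G))).
apply: (affine_rep_le w ws l1_gt0 l2_gt0) => p; rewrite -{1}(affine_graphK G).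
exact: fitzpatrick_affine_le.
Qed.

Lemma repfam_affine (G : graph X) :
  repfam (affine_graph l1 l2 w ws G) = affine_rep l1 l2 w ws @` repfam G.
Proof.
apply/seteqP; split=> [h rep_h|_ [h rep_h <-]]; last exact: representative_affine.
exists (affine_rep l1^-1 l2^-1 w' ws' h); last exact: affine_repK.
by rewrite /repfam /= -(affine_graphK G); exact: representative_affine.
Qed.

End AffineInverse.

Theorem proposition3p2 (R : realType) (X : completeNormedModType R)
    (G : graph X) :
  maximal_monotone G -> repfam G = [set fitzpatrick G] ->
  forall (l1 l2 : R), 0 < l1 -> 0 < l2 ->
  forall (w : X) (ws : dual X),
    maximal_monotone (affine_graph l1 l2 w ws G) /\
    repfam (affine_graph l1 l2 w ws G) =
      [set fitzpatrick (affine_graph l1 l2 w ws G)].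
Proof.
move=> maxG repG l1 l2 l1_gt0 l2_gt0 w ws.
split; first exact: maximal_monotone_affine.
by rewrite repfam_affine // repG image_set1 fitzpatrick_affine.
Qed.
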